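(* Let $D$ be an integral domain with quotient field $K$. The map $\mathcal F\mapsto\boldsymbol{\mathcal S}(\mathcal F):=D[X]\setminus\bigcup\{Q[X]\mid Q\in\mathrm{Spec}(D),\ Q\notin\mathcal F\}$ is a bijection between the set of localizing systems of finite type on $D$ and the set of extended saturated multiplicative subsets of $D[X]$. Moreover, for every localizing system of finite type $\mathcal F$ and every $E\in\overline{\boldsymbol F}(D)$, $E_{\mathcal F}=E\cdot D[X]_{\boldsymbol{\mathcal S}(\mathcal F)}\cap K$.
   Context: $\overline{\boldsymbol F}(D)$ is the set of nonzero $D$-submodules of $K$. A localizing system of ideals of $D$ is a nonempty set $\mathcal F$ of ideals of $D$ with $(0)\notin\mathcal F$ such that: if $I\in\mathcal F$ and $I\subseteq J$ ($J$ an ideal) then $J\in\mathcal F$; and if $I\in\mathcal F$ and $J$ is an ideal with $(J:_D iD)\in\mathcal F$ for every $i\in I$, then $J\in\mathcal F$. It is of finite type if every $I\in\mathcal F$ contains a finitely generated $J\in\mathcal F$. For $E\in\overline{\boldsymbol F}(D)$, $E_{\mathcal F}=\bigcup\{(E:I)\mid I\in\mathcal F\}=\{z\in K\mid (E:_D zD)\in\mathcal F\}$. For a multiplicative set $\mathcal S\subseteq D[X]$, its extended saturation is $\mathcal S^\sharp=D[X]\setminus\bigcup\{P[X]\mid P\in\mathrm{Spec}(D),\ P[X]\cap\mathcal S=\emptyset\}$, and $\mathcal S$ is extended saturated if $\mathcal S=\mathcal S^\sharp$. *)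

From HB Require Import structures.
From mathcomp Require Import all_boot all_order all_algebra.
Set Implicit Arguments. Unset Strict Implicit. Unset Printing Implicit Defensive.
Import Order.TTheory GRing.Theory Num.Theory.
Local Open Scope ring_scope.

(* The integral domain D is represented as a subring D of its quotient
   field K (given as a Prop-valued predicate on K).  Subsets of K (ideals,
   D-submodules) are Prop-valued predicates on K. *)

Definition subring (K : fieldType) (D : K -> Prop) : Prop :=
  D 0 /\ D 1 /\ (forall a b, D a -> D b -> D (a - b)) /\
  (forall a b, D a -> D b -> D (a * b)).

Definition is_quotient_field (K : fieldType) (D : K -> Prop) : Prop :=
  subring D /\ forall z : K, exists a b, D a /\ D b /\ b != 0 /\ z = a / b.

Definition ideal (K : fieldType) (D I : K -> Prop) : Prop :=
  (forall x, I x -> D x) /\ I 0 /\ (forall x y, I x -> I y -> I (x + y)) /\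
  (forall d x, D d -> I x -> I (d * x)).

Definition prime_ideal (K : fieldType) (D P : K -> Prop) : Prop :=
  ideal D P /\ ~ P 1 /\ (forall a b, D a -> D b -> P (a * b) -> P a \/ P b).

Definition fg_ideal (K : fieldType) (D J : K -> Prop) : Prop :=
  ideal D J /\ exists s : seq K, (forall i, (i < size s)%N -> D s`_i) /\
    forall x, J x <-> exists ds : seq K, size ds = size s /\
      (forall i, (i < size ds)%N -> D ds`_i) /\
      x = \sum_(i < size s) ds`_i * s`_i.

Definition colonD (K : fieldType) (D J : K -> Prop) (z : K) : K -> Prop :=
  fun d => D d /\ J (d * z).

Definition localizing_system (K : fieldType) (D : K -> Prop)
    (F : (K -> Prop) -> Prop) : Prop :=
  (forall I, F I -> ideal D I) /\
  (exists I, F I) /\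
  ~ F (fun x => x = 0) /\
  (forall I J, F I -> ideal D J -> (forall x, I x -> J x) -> F J) /\
  (forall I J, F I -> ideal D J -> (forall i, I i -> F (colonD D J i)) -> F J).

Definition finite_type (K : fieldType) (D : K -> Prop)
    (F : (K -> Prop) -> Prop) : Prop :=
  forall I, F I -> exists J, fg_ideal D J /\ F J /\ (forall x, J x -> I x).

Definition Fbar (K : fieldType) (D E : K -> Prop) : Prop :=
  E 0 /\ (forall x y, E x -> E y -> E (x + y)) /\
  (forall d x, D d -> E x -> E (d * x)) /\ (exists x, E x /\ x != 0).

Definition star_F (K : fieldType) (F : (K -> Prop) -> Prop) (E : K -> Prop)
  : K -> Prop :=
  fun z => exists I, F I /\ forall i, I i -> E (z * i).

(* P[X] : polynomials in K[X] with all coefficients in P (so D[X] = polyIn D) *)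
Definition polyIn (K : fieldType) (P : K -> Prop) : {poly K} -> Prop :=
  fun p => forall i, P p`_i.

Definition mult_subset (K : fieldType) (D : K -> Prop) (S : {poly K} -> Prop)
  : Prop :=
  (forall p, S p -> polyIn D p) /\ S 1 /\ ~ S 0 /\
  (forall p q, S p -> S q -> S (p * q)).

Definition ext_saturation (K : fieldType) (D : K -> Prop) (S : {poly K} -> Prop)
  : {poly K} -> Prop :=
  fun p => polyIn D p /\
    ~ exists P, prime_ideal D P /\ (forall q, S q -> ~ polyIn P q) /\ polyIn P p.

Definition ext_saturated (K : fieldType) (D : K -> Prop) (S : {poly K} -> Prop)
  : Prop := forall p, S p <-> ext_saturation D S p.

Definition SF (K : fieldType) (D : K -> Prop) (F : (K -> Prop) -> Prop)
  : {poly K} -> Prop :=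
  fun p => polyIn D p /\ ~ exists Q, prime_ideal D Q /\ ~ F Q /\ polyIn Q p.

Definition toKX (K : fieldType) (p : {poly K}) : {fraction {poly K}} :=
  FracField.tofrac p.

Definition locDX (K : fieldType) (D : K -> Prop) (S : {poly K} -> Prop)
  : {fraction {poly K}} -> Prop :=
  fun r => exists f s, polyIn D f /\ S s /\ r = toKX f / toKX s.

Definition ext_mod (K : fieldType) (D : K -> Prop) (S : {poly K} -> Prop)
  (E : K -> Prop) : {fraction {poly K}} -> Prop :=
  fun z => exists (n : nat) (e : 'I_n -> K) (r : 'I_n -> {fraction {poly K}}),
    (forall i, E (e i)) /\ (forall i, locDX D S (r i)) /\
    z = \sum_(i < n) toKX (e i)%:P * r i.

From HB Require Import structures.
From mathcomp Require Import all_boot all_order all_algebra.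
From mathcomp Require Import boolp classical_sets.
Import GRing.Theory.
Set Implicit Arguments. Unset Strict Implicit.
Local Open Scope classical_set_scope.
Local Open Scope ring_scope.

(* The bridge
   between ideals of D and polynomials is the content: for p in D[X], the
   ideal of D generated by the coefficients of p.  The file proves:
   - prime avoidance (prime_notF_above): for a localizing system F of finite
     type, every ideal outside F lies in a prime outside F (Zorn's lemma,
     taken from the classical library, applied to the ideals outside F);
   - a Gauss lemma (polyIn_prime): P[X] n D[X] is prime when P is;
   hence S(F) is multiplicative and extended saturated, and a polynomial of
   D[X] lies in S(F) exactly when its content is in F (SF_content, SF_Poly).
   Injectivity follows since finitely generated ideals detect F
   (F_le_of_SF_le).  For surjectivity, an extended saturated S gives the
   system F(S) of ideals I with I[X] meeting S, whose transitivity axiom is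
   checked with a polynomial whose coefficients are products of coefficients
   (FS_colon), and S = S(F(S)).  Finally E_F = E D[X]_S(F) n K: one
   inclusion writes z = (z f)/f with f of content in I, the other clears
   denominators and uses SF_content. *)

Section SubringFacts.
Variables (K : fieldType) (D : K -> Prop).
Hypothesis HD : subring D.

Lemma subring0 : D 0. Proof. by case: HD. Qed.
Lemma subring1 : D 1. Proof. by case: HD => _ []. Qed.
Lemma subringB a b : D a -> D b -> D (a - b).
Proof. by case: HD => _ [_ []] H _; apply: H. Qed.
Lemma subringM a b : D a -> D b -> D (a * b).
Proof. by case: HD => _ [_ []] _ H; apply: H. Qed.
Lemma subringN a : D a -> D (- a).
Proof. by move=> Da; rewrite -sub0r; apply: subringB => //; apply: subring0. Qed.
Lemma subringD a b : D a -> D b -> D (a + b).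
Proof. by move=> Da Db; rewrite -[b]opprK; apply: subringB => //; apply: subringN. Qed.

Definition Dmodule (E : K -> Prop) : Prop :=
  E 0 /\ (forall x y, E x -> E y -> E (x + y)) /\
  (forall d x, D d -> E x -> E (d * x)).

Lemma Dmodule_sum E (I : Type) {r : seq I} (P : pred I) (f : I -> K) :
  Dmodule E -> (forall i, P i -> E (f i)) -> E (\sum_(i <- r | P i) f i).
Proof. by move=> [E0 [EDD _]] Ef; apply: big_ind. Qed.

Lemma ideal_Dmodule I : ideal D I -> Dmodule I.
Proof. by case=> _ [? [? ?]]. Qed.

Lemma Dmodule_D : Dmodule D.
Proof. by split; [apply: subring0 | split; [apply: subringD | apply: subringM]]. Qed.

Lemma ideal_D : ideal D D.
Proof. by split=> //; apply: Dmodule_D. Qed.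

Lemma ideal_mulr I d x : ideal D I -> D d -> I x -> I (x * d).
Proof. by move=> [_ [_ [_ IM]]] Dd Ix; rewrite mulrC; apply: IM. Qed.

Lemma ideal_sub I x y : ideal D I -> I x -> I y -> I (x - y).
Proof.
move=> [_ [_ [IA IM]]] Ix Iy; apply: IA => //.
by rewrite -mulN1r; apply: IM => //; apply/subringN/subring1.
Qed.

Lemma colon_ideal J z : ideal D J -> ideal D (colonD D J z).
Proof.
move=> [_ [J0 [JA JM]]]; split; first by move=> x [].
split; first by split; [apply: subring0 | rewrite mul0r].
split; first by move=> x y [Dx Jx] [Dy Jy]; split; [apply: subringD | rewrite mulrDl; apply: JA].
by move=> d x Dd [Dx Jx]; split; [apply: subringM | rewrite -mulrA; apply: JM].
Qed.

Lemma chain_union_ideal (C : set (K -> Prop)) :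
  C `<=` ideal D -> total_on C subset -> (exists X, C X) ->
  ideal D (\bigcup_(X in C) X).
Proof.
move=> CI Ctot [X0 CX0]; split.
  by move=> x [X CX Xx]; case: (CI X CX) => XD _; apply: XD.
split; first by exists X0 => //; case: (CI X0 CX0) => _ [].
split; last first.
  by move=> d x Dd [X CX Xx]; exists X => //; case: (CI X CX) => _ [_ [_ XM]]; apply: XM.
move=> x y [X CX Xx] [Y CY Yy].
have [XY|YX] := Ctot X Y CX CY.
- by exists Y => //; case: (CI Y CY) => _ [_ [YA _]]; apply: YA => //; apply: XY.
- by exists X => //; case: (CI X CX) => _ [_ [XA _]]; apply: XA => //; apply: YX.
Qed.

Lemma polyIn_coef E (p : {poly K}) :
  E 0 -> (forall i, (i < size p)%N -> E p`_i) -> polyIn E p.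
Proof. by move=> E0 Ep i; case: (ltnP i (size p)) => [/Ep | /(nth_default 0) ->]. Qed.

Lemma polyIn_Poly E (s : seq K) :
  E 0 -> (forall i, (i < size s)%N -> E s`_i) -> polyIn E (Poly s).
Proof.
move=> E0 Es i; rewrite coef_Poly.
by case: (ltnP i (size s)) => [/Es | /(nth_default 0) ->].
Qed.

Lemma polyIn_mul E p q : Dmodule E -> polyIn D q -> polyIn E p -> polyIn E (q * p).
Proof.
move=> EM Dq Ep i; rewrite coefM; apply: Dmodule_sum => // j _.
by case: EM => _ [_ EDM]; apply: EDM.
Qed.

Lemma polyInD_mul p q : polyIn D p -> polyIn D q -> polyIn D (p * q).
Proof. by move=> Dp Dq; apply: polyIn_mul => //; apply: Dmodule_D. Qed.

Lemma polyInD1 : polyIn D 1.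
Proof. by move=> i; rewrite coefC; case: (i == 0)%N; [apply: subring1 | apply: subring0]. Qed.

Lemma polyInD_Xn n : polyIn D 'X^n.
Proof. by move=> i; rewrite coefXn; case: (i == n); [apply: subring1 | apply: subring0]. Qed.

Lemma polyIn_mem E (p : {poly K}) a : polyIn E p -> a \in (p : seq K) -> E a.
Proof. by move=> Ep /(nthP 0) [i _ <-]. Qed.

Lemma not_polyIn_coef P (p : {poly K}) :
  P 0 -> ~ polyIn P p -> exists2 a, a \in (p : seq K) & ~ P a.
Proof.
move=> P0 /existsNP [i Pi]; exists p`_i => //; apply: mem_nth.
by rewrite ltnNge; apply: contra_notN Pi => /(nth_default 0) ->.
Qed.

End SubringFacts.

Section GeneratedIdeal.
Variables (K : fieldType) (D : K -> Prop).
Hypothesis HD : subring D.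

Definition ideal_gen (s : seq K) : K -> Prop := fun x =>
  exists ds : seq K, size ds = size s /\
    (forall i, (i < size ds)%N -> D ds`_i) /\ x = \sum_(i < size s) ds`_i * s`_i.

Lemma ideal_gen_min I s x :
  ideal D I -> (forall i, (i < size s)%N -> I s`_i) -> ideal_gen s x -> I x.
Proof.
move=> HI Is [ds [sz [Dds ->]]]; apply: (Dmodule_sum (ideal_Dmodule HI)) => i _.
by case: HI => _ [_ [_ IM]]; apply: IM; [apply: Dds; rewrite sz | apply: Is].
Qed.

Lemma ideal_gen_mem s i : (i < size s)%N -> ideal_gen s s`_i.
Proof.
move=> si; exists (mkseq (fun j => (j == i)%:R) (size s)); rewrite size_mkseq.
split=> //; split=> [j sj|].
  by rewrite nth_mkseq //; case: (j == i); [apply: subring1 | apply: subring0].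
rewrite (bigD1 (Ordinal si)) //= nth_mkseq // eqxx mul1r big1 ?addr0 // => j ji.
by rewrite nth_mkseq // (negbTE (ji : (j : nat) != i)) mul0r.
Qed.

Lemma ideal_gen_ideal s : (forall i, (i < size s)%N -> D s`_i) -> ideal D (ideal_gen s).
Proof.
move=> Ds; split; first by move=> x; apply: ideal_gen_min => //; apply: ideal_D.
split.
  exists (nseq (size s) 0); rewrite size_nseq; split=> //; split.
    by move=> i si; rewrite nth_nseq si; apply: subring0.
  by rewrite big1 // => i _; rewrite nth_nseq ltn_ord mul0r.
split=> [x y | d x Dd].
  move=> [ds [sz [Dds ->]]] [es [sz' [Des ->]]].
  exists (mkseq (fun i => ds`_i + es`_i) (size s)); rewrite size_mkseq; split=> //; split.
    move=> i si; rewrite nth_mkseq //.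
    by apply: subringD => //; [apply: Dds | apply: Des]; rewrite ?sz ?sz'.
  by rewrite -big_split; apply: eq_bigr => i _; rewrite nth_mkseq // mulrDl.
move=> [ds [sz [Dds ->]]].
exists (mkseq (fun i => d * ds`_i) (size s)); rewrite size_mkseq; split=> //; split.
  by move=> i si; rewrite nth_mkseq //; apply: subringM => //; apply: Dds; rewrite sz.
by rewrite mulr_sumr; apply: eq_bigr => i _; rewrite nth_mkseq // mulrA.
Qed.

Lemma fg_gen_mem J s : ideal D J -> (forall x, J x <-> ideal_gen s x) ->
  forall i, J s`_i.
Proof.
move=> [_ [J0 _]] Js i; case: (ltnP i (size s)) => [si | /(nth_default 0) ->] //.
by apply/Js/ideal_gen_mem.
Qed.

End GeneratedIdeal.

Lemma chain_finite_bound (T : eqType) (C : set (set T)) (s : seq T) :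
  total_on C subset -> (exists X, C X) ->
  (forall x, x \in s -> (\bigcup_(X in C) X) x) ->
  exists2 X, C X & forall x, x \in s -> X x.
Proof.
move=> Ctot [X0 CX0]; elim: s => [|y s IH] sC; first by exists X0.
have [X CX Xs] := IH (fun x xs => sC x (mem_behead (s := y :: s) xs)).
have [Y CY Yy] := sC y (mem_head y s).
have [XY|YX] := Ctot X Y CX CY.
- by exists Y => // x; rewrite inE => /orP [/eqP -> | /Xs /XY].
- by exists X => // x; rewrite inE => /orP [/eqP -> | /Xs]; [apply: YX |].
Qed.

Lemma zorn_above (T : Type) (M : set (set T)) (X0 : set T) : M X0 ->
  (forall C, C `<=` M -> total_on C subset -> (exists X, C X) ->
     M (\bigcup_(X in C) X)) ->
  exists A, [/\ M A, X0 `<=` A & forall B, M B -> A `<=` B -> B `<=` A].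
Proof.
move=> MX0 Mchain.
(* Zorn_bigcup also needs the empty chain, whose union is empty: we add to
   the members of M above X0 all the subsets of X0. *)
pose M0 X := M X /\ X0 `<=` X.
pose P X := X `<=` X0 \/ M0 X.
have Pchain C : C `<=` P -> total_on C subset -> P (\bigcup_(X in C) X).
  move=> CP Ctot.
  have [CX0 | /existsNP [Y /not_implyP [CY nYX0]]] :=
    pselect (forall X, C X -> X `<=` X0).
    by left => x [X /CX0]; apply.
  have M0Y : M0 Y by case: (CP Y CY).
  have Cup : \bigcup_(X in C) X = \bigcup_(X in C `&` M0) X.
    apply/seteqP; split=> x [X CX Xx]; last by exists X => //; case: CX.
    case: (CP X CX) => [XX0 | M0X]; last by exists X.
    by exists Y => //; apply/M0Y.2/XX0.
  right; rewrite Cup; split.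
    apply: Mchain; [by move=> X [_ []] | | by exists Y].
    by move=> X Z [CX _] [CZ _]; apply: Ctot.
  by move=> x X0x; exists Y => //; apply: M0Y.2.
have [A [PA Amax]] := Zorn_bigcup Pchain.
have [MA X0A] : M0 A.
  case: PA => // AX0; have M0X0 : M0 X0 by split=> // x.
  have [X0A | nX0A] := pselect (X0 `<=` A).
    by have -> : A = X0 by apply/seteqP.
  by exfalso; apply: (Amax X0) => //; right.
exists A; split=> // B MB AB; apply: contrapT => nBA.
by apply: (Amax B); [split | right; split=> //; apply: subset_trans AB].
Qed.

Section PrimeAvoidance.
Variables (K : fieldType) (D : K -> Prop).
Hypothesis HD : subring D.
Variable F : (K -> Prop) -> Prop.
Hypothesis LS : localizing_system D F.
Hypothesis FT : finite_type D F.

Lemma F_ideal I : F I -> ideal D I.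
Proof. by case: LS => FI _; apply: FI. Qed.

Lemma F_up I J : F I -> ideal D J -> I `<=` J -> F J.
Proof. by case: LS => _ [_ [_ [Fup _]]]; apply: Fup. Qed.

Lemma F_D : F D.
Proof.
case: (LS) => _ [[I FI] _]; apply: (F_up FI (ideal_D HD)).
by case: (F_ideal FI) => ID _.
Qed.

Definition adjoin (Q : K -> Prop) (a : K) : K -> Prop :=
  fun x => exists q d, Q q /\ D d /\ x = q + d * a.

Lemma adjoin_ideal Q a : ideal D Q -> D a -> ideal D (adjoin Q a).
Proof.
move=> [QD [Q0 [QA QM]]] Da; split.
  by move=> _ [q [d [Qq [Dd ->]]]]; exact: (subringD HD (QD _ Qq) (subringM HD Dd Da)).
split; first by exists 0, 0; rewrite mul0r addr0; split=> //; split=> //; apply: subring0.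
split=> [_ _ [q [d [Qq [Dd ->]]]] [q' [d' [Qq' [Dd' ->]]]] | e _ De [q [d [Qq [Dd ->]]]]].
  exists (q + q'), (d + d'); split; first exact: QA.
  by split; [apply: subringD | rewrite mulrDl addrACA].
exists (e * q), (e * d); split; first exact: QM.
by split; [apply: subringM | rewrite mulrDr mulrA].
Qed.

Lemma adjoin_sub Q a : ideal D Q -> Q `<=` adjoin Q a.
Proof.
by move=> HQ x Qx; exists x, 0; rewrite mul0r addr0; split=> //; split=> //; apply: subring0.
Qed.

Lemma adjoin_mem Q a : ideal D Q -> adjoin Q a a.
Proof.
by move=> [_ [Q0 _]]; exists 0, 1; rewrite add0r mul1r; split=> //; split=> //; apply: subring1.
Qed.

(* Since F is of finite type, an ideal lying in F is witnessed by finitely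
   many of its elements; hence the union of a chain of ideals outside F is
   outside F. *)
Lemma chain_union_notF (C : set (K -> Prop)) :
  C `<=` (fun I => ideal D I /\ ~ F I) -> total_on C subset -> (exists X, C X) ->
  ~ F (\bigcup_(X in C) X).
Proof.
move=> CI Ctot Cne FU.
have [J [[HJ [s [Ds Js]]] [FJ JU]]] := FT FU.
have [X CX Xs] : exists2 X, C X & forall x, x \in s -> X x.
  apply: chain_finite_bound => // x /(nthP 0) [i si <-].
  exact/JU/(fg_gen_mem HD HJ Js).
have [HX nFX] := CI X CX; apply/nFX/(F_up FJ HX) => x /Js.
by apply: (ideal_gen_min HX) => i si; apply/Xs/mem_nth.
Qed.

Lemma maximal_notF_prime Q : ideal D Q -> ~ F Q ->
  (forall I, ideal D I -> ~ F I -> Q `<=` I -> I `<=` Q) -> prime_ideal D Q.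
Proof.
move=> HQ nFQ Qmax; have [QD [Q0 [QA QM]]] := HQ.
split=> //; split.
  by move=> Q1; apply/nFQ/(F_up F_D HQ) => x Dx; rewrite -[x]mulr1; apply: QM.
move=> a b Da Db Qab; apply: contrapT => /not_orP [nQa nQb].
have F_adjoin c : D c -> ~ Q c -> F (adjoin Q c).
  move=> Dc nQc; apply: contrapT => nF; apply/nQc/(Qmax _ (adjoin_ideal HQ Dc)) => //.
    exact: adjoin_sub.
  exact: adjoin_mem.
(* (Q :_D i) contains Q + Db for every i in Q + Da, since ab lies in Q *)
have colon_F i : adjoin Q a i -> F (colonD D Q i).
  move=> [q [d [Qq [Dd ->]]]]; apply: (F_up (F_adjoin b Db nQb) (colon_ideal HD _ HQ)).
  move=> _ [q' [d' [Qq' [Dd' ->]]]].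
  have [Dq Dq'] := (QD q Qq, QD q' Qq').
  split; first exact: (subringD HD Dq' (subringM HD Dd' Db)).
  rewrite mulrDl; apply: (QA).
    by apply: (ideal_mulr HQ) => //; exact: (subringD HD Dq (subringM HD Dd Da)).
  rewrite mulrDr; apply: (QA); first by apply: (QM) => //; apply: subringM.
  by rewrite mulrACA [b * a]mulrC; apply: QM => //; apply: subringM.
apply: nFQ; case: LS => _ [_ [_ [_ Fcolon]]].
exact: (Fcolon _ _ (F_adjoin a Da nQa) HQ).
Qed.

Lemma prime_notF_above J : ideal D J -> ~ F J ->
  exists Q, [/\ prime_ideal D Q, J `<=` Q & ~ F Q].
Proof.
move=> HJ nFJ.
have [Q [[HQ nFQ] JQ Qmax]] := @zorn_above K (fun I => ideal D I /\ ~ F I) J (conj HJ nFJ)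
  (fun C CI Ctot Cne => conj (chain_union_ideal (fun X CX => (CI X CX).1) Ctot Cne)
                             (chain_union_notF CI Ctot Cne)).
exists Q; split=> //; apply: maximal_notF_prime => // I HI nFI; exact: Qmax.
Qed.

End PrimeAvoidance.

Lemma least_failure (P : nat -> Prop) : ~ (forall i, P i) ->
  exists i, ~ P i /\ forall k, (k < i)%N -> P k.
Proof.
move=> /existsNP [n nPn]; have exP : exists n, `[< ~ P n >] by exists n; apply/asboolP.
case: (ex_minnP exP) => i /asboolP nPi imin; exists i; split=> // k ki.
by apply: contrapT => nPk; have := imin k (asboolT nPk); rewrite leqNgt ki.
Qed.

Section PolynomialFacts.
Variables (K : fieldType) (D : K -> Prop).
Hypothesis HD : subring D.

(* If p and q are not in P[X], the coefficient of X^(i+j) of pq, with i and j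
   the least indices of coefficients outside P, is outside P. *)
Lemma polyIn_prime P p q : prime_ideal D P -> polyIn D p -> polyIn D q ->
  polyIn P (p * q) -> polyIn P p \/ polyIn P q.
Proof.
move=> [HP [_ Pprime]] Dp Dq Ppq; have [_ [_ [_ PM]]] := HP.
apply: contrapT => /not_orP [/least_failure [i [Pi Plti]] /least_failure [j [Pj Pltj]]].
have ij : (i < (i + j).+1)%N by rewrite ltnS leq_addr.
have Prest : P (\sum_(k < (i + j).+1 | k != Ordinal ij) p`_k * q`_(i + j - k)).
  apply: (Dmodule_sum (ideal_Dmodule HP)) => k /eqP kij.
  have [ki | ik | ki] := ltngtP k i.
  - by apply: (ideal_mulr HP); [apply: Dq | apply: Plti].
  - apply: PM => //; apply: Pltj.
    by rewrite ltn_subLR ?ltn_add2r // -ltnS.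
  - by exfalso; apply: kij; apply: val_inj.
have := ideal_sub HD HP (Ppq (i + j)%N) Prest.
rewrite coefM (bigD1 (Ordinal ij)) //= addKn addrK.
by case/Pprime.
Qed.

Lemma zero_prime : prime_ideal D (fun x => x = 0).
Proof.
split.
  split; first by move=> x ->; apply: subring0.
  by split=> //; split=> [x y -> ->|d x _ ->]; rewrite ?addr0 ?mulr0.
split; first by move/eqP; rewrite oner_eq0.
by move=> a b _ _ /eqP; rewrite mulf_eq0 => /orP [/eqP|/eqP]; [left|right].
Qed.

End PolynomialFacts.

Section ExtendedSaturation.
Variables (K : fieldType) (D : K -> Prop).
Hypothesis HD : subring D.
Variable F : (K -> Prop) -> Prop.
Hypothesis LS : localizing_system D F.
Hypothesis FT : finite_type D F.

(* S(F) is multiplicative: it avoids the prime (0) of D, which is not in F,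
   and the complement of a union of primes P[X] is multiplicative. *)
Lemma SF_mult : mult_subset D (SF D F).
Proof.
split; first by move=> p [].
split.
  split; first exact: polyInD1.
  by move=> [Q [[_ [nQ1 _]] [_ Q1]]]; apply: nQ1; have := Q1 0%N; rewrite coefC eqxx.
split.
  move=> [_ []]; exists (fun x => x = 0); split; first exact: zero_prime.
  by split; [case: LS => _ [_ []] | move=> i; rewrite coef0].
move=> p q [Dp nQp] [Dq nQq]; split; first exact: polyInD_mul.
move=> [Q [HQ [nFQ Qpq]]].
by case: (polyIn_prime HD HQ Dp Dq Qpq) => Qr; [apply: nQp | apply: nQq]; exists Q.
Qed.

Lemma SF_neq0 p : SF D F p -> p != 0.
Proof.
by move=> Sp; apply/eqP => p0; case: SF_mult => _ [_ [nS0 _]]; apply: nS0; rewrite -p0.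
Qed.

(* The primes P with P[X] disjoint from S(F) are exactly the primes outside F. *)
Lemma SF_sat : ext_saturated D (SF D F).
Proof.
move=> p; split=> [[Dp nQp] | [Dp nPp]]; split=> // [[Q [HQ [Q_SF Qp]]]].
  by apply: (Q_SF p) => //; split.
apply: nPp; exists Q; split=> //; split=> // q [_ nQq] Qq.
by apply: nQq; exists Q.
Qed.

(* An element of S(F) has its content (the ideal of its coefficients) in F:
   otherwise the content lies in a prime Q outside F, and p is in Q[X]. *)
Lemma SF_content p : SF D F p -> F (ideal_gen D p).
Proof.
move=> [Dp nQp]; apply: contrapT => nF.
have Hp := ideal_gen_ideal HD (fun i _ => Dp i).
have [Q [HQ pQ nFQ]] := prime_notF_above HD LS FT Hp nF.
apply: nQp; exists Q; split=> //; split=> //.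
by apply: (polyIn_coef (proj1 (proj2 (proj1 HQ)))) => i si; apply/pQ/ideal_gen_mem.
Qed.

Lemma SF_Poly s : (forall i, (i < size s)%N -> D s`_i) -> F (ideal_gen D s) ->
  SF D F (Poly s).
Proof.
move=> Ds Fs; split; first by apply: polyIn_Poly; [apply: subring0 | apply: Ds].
move=> [Q [HQ [nFQ Qs]]]; apply/nFQ/(F_up LS Fs (proj1 HQ)).
by move=> x; apply: (ideal_gen_min (proj1 HQ)) => i si; have := Qs i; rewrite coef_Poly.
Qed.

End ExtendedSaturation.

(* S reflects inclusion of localizing systems of finite type: a finitely
   generated J in F1 gives a polynomial of S(F1), hence of S(F2), whose
   content J lies in F2. *)
Lemma F_le_of_SF_le (K : fieldType) (D : K -> Prop) (F1 F2 : (K -> Prop) -> Prop) :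
  subring D -> localizing_system D F1 -> finite_type D F1 ->
  localizing_system D F2 -> finite_type D F2 ->
  (forall p, SF D F1 p -> SF D F2 p) -> forall I, F1 I -> F2 I.
Proof.
move=> HD LS1 FT1 LS2 FT2 S12 I F1I.
have [J [[HJ [s [Ds Js]]] [F1J JI]]] := FT1 I F1I.
have F1s : F1 (ideal_gen D s) by apply: (F_up LS1 F1J (ideal_gen_ideal HD Ds)) => x /Js.
have F2s := SF_content HD LS2 FT2 (S12 _ (SF_Poly HD LS1 Ds F1s)).
apply: (F_up LS2 (F_up LS2 F2s HJ _) (F_ideal LS1 F1I) JI).
move=> x; apply: (ideal_gen_min HJ) => i _.
by rewrite coef_Poly; apply: (fg_gen_mem HD HJ Js).
Qed.

Section ProductPolynomial.
Variables (K : fieldType) (f : {poly K}) (G : K -> {poly K}).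

Definition prod_poly : {poly K} :=
  Poly (flatten [seq [seq c * a | c <- (G a : seq K)] | a <- (f : seq K)]).

Lemma prod_poly_coef i : prod_poly`_i = 0 \/
  exists a c, [/\ a \in (f : seq K), c \in (G a : seq K) & prod_poly`_i = c * a].
Proof.
rewrite /prod_poly coef_Poly; set s := flatten _.
have [si | /(nth_default 0) -> //] := ltnP i (size s); last by left.
right; have /flattenP [_ /mapP [a af ->] /mapP [c cG ->]] := mem_nth 0 si.
by exists a, c.
Qed.

Lemma prod_poly_mem a c : a \in (f : seq K) -> c \in (G a : seq K) ->
  exists i, prod_poly`_i = c * a.
Proof.
move=> af cG; rewrite /prod_poly; set s := flatten _.
have cas : c * a \in s by apply/flattenP; exists [seq c' * a | c' <- (G a : seq K)];
  apply/mapP; [exists a | exists c].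
by exists (index (c * a) s); rewrite coef_Poly nth_index.
Qed.

End ProductPolynomial.

Section FromMultiplicativeSubset.
Variables (K : fieldType) (D : K -> Prop).
Hypothesis HD : subring D.
Variable S : {poly K} -> Prop.
Hypothesis HS : mult_subset D S.
Hypothesis HSat : ext_saturated D S.

Definition FS (I : K -> Prop) : Prop := ideal D I /\ exists2 f, S f & polyIn I f.

(* The transitivity axiom of F(S): given f in S n I[X] and, for each
   coefficient a of f, some G a in S n (J : a)[X], the products of the
   coefficients give a polynomial of J[X] lying in no prime P[X] disjoint
   from S; it lies in S since S is extended saturated. *)
Lemma FS_colon I J : FS I -> ideal D J -> (forall i, I i -> FS (colonD D J i)) -> FS J.
Proof.
move=> [HI [f Sf If]] HJ Fcolon; split=> //.
have [G GP] : {G : K -> {poly K} &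
    forall a, I a -> S (G a) /\ polyIn (colonD D J a) (G a)}.
  apply: (choice (P := fun a g => I a -> S g /\ polyIn (colonD D J a) g)) => a.
  have [/Fcolon [_ [g Sg Jg]] | nIa] := pselect (I a).
    by exists g.
  by exists 0.
have fD a : a \in (f : seq K) -> D a.
  by move=> /(polyIn_mem If); case: HI => ID _; apply: ID.
have GJ a c : a \in (f : seq K) -> c \in (G a : seq K) -> colonD D J a c.
  by move=> af; apply: polyIn_mem (GP a (polyIn_mem If af)).2.
exists (prod_poly f G); last first.
  move=> i; have [-> | [a [c [af cG ->]]]] := prod_poly_coef f G i; first by case: HJ => _ [].
  by case: (GJ a c af cG).
apply/HSat; split.
  move=> i; have [-> | [a [c [af cG ->]]]] := prod_poly_coef f G i; first exact: subring0.
  by case: (GJ a c af cG) => Dc _; exact: (subringM HD Dc (fD a af)).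
move=> [P [[HP [_ Pprime]] [PS Ph]]]; have P0 : P 0 by case: HP => _ [].
have [a af nPa] := not_polyIn_coef P0 (PS f Sf).
have [c cG nPc] := not_polyIn_coef P0 (PS _ (GP a (polyIn_mem If af)).1).
have [k hk] := prod_poly_mem af cG.
have [Dc _] := GJ a c af cG.
by have := Ph k; rewrite hk => /(Pprime _ _ Dc (fD a af)) [].
Qed.

Lemma FS_localizing : localizing_system D FS.
Proof.
have [_ [S1 [nS0 _]]] := HS.
split; first by move=> I [].
split; first by exists D; split; [exact: ideal_D | exists 1 => //; exact: polyInD1].
split.
  move=> [_ [f Sf f0]]; apply: nS0; suff -> : 0 = f by [].
  by apply/polyP => i; rewrite coef0 f0.
split; last exact: FS_colon.
by move=> I J [_ [f Sf If]] HJ IJ; split=> //; exists f => // i; apply: IJ.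
Qed.

(* If f in S has coefficients in I, its content is a finitely generated
   ideal of F(S) contained in I. *)
Lemma FS_finite_type : finite_type D FS.
Proof.
have [SD _] := HS; move=> I [HI [f Sf If]].
have Df : forall i, (i < size f)%N -> D f`_i by move=> i _; apply: SD.
have Hf := ideal_gen_ideal HD Df.
exists (ideal_gen D f); split; first by split=> //; exists f.
split; last by move=> x; apply: (ideal_gen_min HI) => i _; apply: If.
split=> //; exists f => //.
by apply: (polyIn_coef (proj1 (proj2 Hf))) => i si; apply: ideal_gen_mem.
Qed.

(* S is recovered as S(F(S)): both are the complement of the union of the
   primes P[X] disjoint from S. *)
Lemma SF_FS p : S p <-> SF D FS p.
Proof.
rewrite (HSat p); split=> [[Dp nPp] | [Dp nQp]]; split=> // [[Q [HQ [Q_S Qp]]]].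
  apply: nPp; exists Q; split=> //; split=> // q Sq Qq.
  by apply: Q_S; split; [exact: (proj1 HQ) | exists q].
by apply: nQp; exists Q; split=> //; split=> // [[_ [q Sq Qq]]]; apply: (Q_S q).
Qed.

End FromMultiplicativeSubset.

Lemma toKXD (K : fieldType) (p q : {poly K}) : toKX (p + q) = toKX p + toKX q.
Proof. by rewrite /toKX rmorphD. Qed.

Lemma toKXM (K : fieldType) (p q : {poly K}) : toKX (p * q) = toKX p * toKX q.
Proof. by rewrite /toKX rmorphM. Qed.

Lemma toKX_sum (K : fieldType) (I : Type) (r : seq I) (P : pred I)
    (q : I -> {poly K}) :
  toKX (\sum_(i <- r | P i) q i) = \sum_(i <- r | P i) toKX (q i).
Proof. by rewrite /toKX rmorph_sum. Qed.

Lemma toKX_inj (K : fieldType) (p q : {poly K}) : toKX p = toKX q -> p = q.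
Proof. by move/eqP; rewrite /toKX tofrac_eq => /eqP. Qed.

Section LocalizedExtension.
Variables (K : fieldType) (D : K -> Prop).
Hypothesis HD : subring D.

Lemma clear_denominators S E n (e : 'I_n -> K) (r : 'I_n -> {fraction {poly K}}) :
  mult_subset D S -> Dmodule D E -> (forall i, E (e i)) -> (forall i, locDX D S (r i)) ->
  exists s g, [/\ S s, polyIn E g &
    (\sum_(i < n) toKX (e i)%:P * r i) * toKX s = toKX g].
Proof.
move=> [SD [S1 [nS0 SM]]] HE; have [E0 [EA EM]] := HE.
elim: n e r => [|n IH] e r Ee Sr.
  exists 1, 0; split=> //; first by move=> i; rewrite coef0.
  by rewrite big_ord0 mul0r /toKX rmorph0.
have [s [g [Ss Eg sg]]] := IH _ _ (fun i => Ee (widen_ord (leqnSn n) i))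
                                   (fun i => Sr (widen_ord (leqnSn n) i)).
have [f [t [Df [St rt]]]] := Sr ord_max.
have t0 : toKX t != 0.
  by rewrite /toKX tofrac_eq0; apply/eqP => t0; apply: nS0; rewrite -t0.
exists (s * t), (g * t + (e ord_max)%:P * (f * s)); split; first exact: SM.
  move=> i; rewrite coefD coefCM; apply: EA.
    by rewrite mulrC; apply: (polyIn_mul HE) => //; apply: SD.
  by rewrite mulrC; apply: EM => //; apply: (polyInD_mul HD Df); apply: SD.
rewrite big_ord_recr /= rt toKXD !toKXM mulrDl mulrA sg.
by congr (_ + _); rewrite -mulrA; congr (_ * _); rewrite mulrACA mulVf ?mulr1.
Qed.

Variable F : (K -> Prop) -> Prop.
Hypothesis LS : localizing_system D F.
Hypothesis FT : finite_type D F.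
Variable E : K -> Prop.
Hypothesis HE : Dmodule D E.

(* If zI lies in E for some I in F, choose a finitely generated J in I n F
   with generators s and f = Poly s in S(F); then z = sum_i (z f_i) X^i / f. *)
Lemma star_F_ext_mod z : star_F F E z -> ext_mod D (SF D F) E (toKX z%:P).
Proof.
move=> [I [FI zI]].
have [J [[HJ [s [Ds Js]]] [FJ JI]]] := FT FI.
have Fs : F (ideal_gen D s) by apply: (F_up LS FJ (ideal_gen_ideal HD Ds)) => x /Js.
have Sf := SF_Poly HD LS Ds Fs; set f := Poly s in Sf.
exists (size f), (fun i => z * f`_i), (fun i => toKX 'X^i / toKX f); split.
  by move=> i; apply/zI/JI; rewrite coef_Poly; apply: (fg_gen_mem HD HJ Js).
split; first by move=> i; exists 'X^i, f; split=> //; apply: polyInD_Xn.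
have f0 : toKX f != 0 by rewrite /toKX tofrac_eq0; exact: (SF_neq0 HD LS Sf).
have zf : z%:P * f = \sum_(i < size f) (z * f`_i)%:P * 'X^i.
  rewrite -{1}[f]coefK poly_def mulr_sumr; apply: eq_bigr => i _.
  by rewrite -mul_polyC mulrA polyCM.
under eq_bigr => i _ do rewrite mulrA -toKXM.
by rewrite -mulr_suml -toKX_sum -zf toKXM mulfK.
Qed.

(* Conversely, clearing denominators gives z s = g with s in S(F) and g in
   E[X]; then z times the content of s, which lies in F, is inside E. *)
Lemma ext_mod_star_F z : ext_mod D (SF D F) E (toKX z%:P) -> star_F F E z.
Proof.
move=> [n [e [r [Ee [Sr zr]]]]]; have [_ [_ EM]] := HE.
have [s [g [Ss Eg sg]]] := clear_denominators (SF_mult HD LS) HE Ee Sr.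
have zsg : z%:P * s = g by apply: toKX_inj; rewrite toKXM zr.
exists (ideal_gen D s); split; first exact: (SF_content HD LS FT Ss).
move=> _ [ds [sz [Dds ->]]]; rewrite mulr_sumr; apply: (Dmodule_sum HE) => k _.
rewrite mulrCA; apply: EM; first by apply: Dds; rewrite sz.
by have := Eg k; rewrite -zsg coefCM.
Qed.

End LocalizedExtension.

Theorem corollary2p2 (K : fieldType) (D : K -> Prop) :
  is_quotient_field D ->
  (* S(F) lands in the extended saturated multiplicative subsets *)
  (forall F, localizing_system D F -> finite_type D F ->
     mult_subset D (SF D F) /\ ext_saturated D (SF D F)) /\
  (* injectivity *)
  (forall F1 F2, localizing_system D F1 -> finite_type D F1 ->
     localizing_system D F2 -> finite_type D F2 ->
     (forall p, SF D F1 p <-> SF D F2 p) -> forall I, F1 I <-> F2 I) /\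
  (* surjectivity *)
  (forall S, mult_subset D S -> ext_saturated D S ->
     exists F, localizing_system D F /\ finite_type D F /\
       forall p, S p <-> SF D F p) /\
  (* E_F = E D[X]_{S(F)} \cap K *)
  (forall F, localizing_system D F -> finite_type D F ->
     forall E, Fbar D E ->
       forall z : K, star_F F E z <-> ext_mod D (SF D F) E (toKX z%:P)).
Proof.
move=> [HD _]; split.
  by move=> F LS FT; split; [exact: SF_mult | exact: SF_sat].
split.
  move=> F1 F2 LS1 FT1 LS2 FT2 S12 I.
  by split; apply: (F_le_of_SF_le HD) => // p /S12.
split.
  move=> S HS HSat; exists (FS D S); split; first exact: FS_localizing.
  by split; [exact: FS_finite_type | exact: SF_FS].
move=> F LS FT E [E0 [EA [EM _]]] z.
have HE : Dmodule D E by split=> //; split.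
by split; [exact: star_F_ext_mod | exact: ext_mod_star_F].
Qed.
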